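(* Let $P,Q$ be closed wire calculus terms of sort $(k,l)$, $R$ a closed term of sort $(m,n)$, $S$ a closed term of sort $(l,l')$ and $T$ a closed term of sort $(k',k)$, and suppose $P\sim Q$. Then: (i) $P\mathrel{;}S\sim Q\mathrel{;}S$ and $T\mathrel{;}P\sim T\mathrel{;}Q$; (ii) $P\otimes R\sim Q\otimes R$ and $R\otimes P\sim R\otimes Q$; (iii) for prefix strings $u,v$ such that the prefix terms are well-sorted closed terms, $\frac{u}{v}.P\sim\frac{u}{v}.Q$; (iv) $P+R\sim Q+R$ and $R+P\sim R+Q$ (whenever these are well-sorted, i.e. $R$ has sort $(k,l)$).
   Context: Wire calculus. Fix a set $\Sigma$ of signals and a symbol $\iota\notin\Sigma$ (''no signal''); $L=\Sigma\cup\{\iota\}$. Prefix strings are words over the atoms: signal variables $x$, binders $\lambda x$, $\iota$, and constants $\sigma\in\Sigma$. Terms: $P::= Y \mid P\mathrel{;}P\mid P\otimes P\mid \frac{u}{v}.P\mid P+P\mid \mu Y{:}\tau.P$, with $Y$ process variables, $u,v$ prefix strings, $\tau$ a sort $(k,l)$, $k,l\ge0$. In $\frac{u}{v}.P$ the variables $x$ with $\lambda x$ occurring in $uv$ are bound in $P$ (the set $bd$); other variables occurring in $uv$ are free ($fr$). Sorting (context $\Gamma$ of sorted process variables and signal variables): $Y$ has its declared sort; if $P:(k,n)$, $R:(n,l)$ then $P\mathrel{;}R:(k,l)$; if $P:(k,l)$, $Q:(m,n)$ then $P\otimes Q:(k+m,l+n)$; if $P:\tau$ under $\Gamma,Y{:}\tau'$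 then $\mu Y{:}\tau'.P:\tau$; if $|u|=k$, $|v|=l$, $fr\cap bd=\varnothing$, $fr\subseteq\Gamma$ and $P:(k,l)$ under $\Gamma\cup bd$, then $\frac{u}{v}.P:(k,l)$; if $P,Q:\tau$ then $P+Q:\tau$. Only closed terms (sorted in the empty context) are considered; terms are taken up to renaming of bound variables, with no other structural congruence. $\otimes$ binds tighter than $;$. Semantics: transitions $P\xrightarrow[\vec b]{\vec a}Q$ with $\vec a,\vec b\in L^*$ (upper label $\vec a$ of length $k$, lower $\vec b$ of length $l$ for $P:(k,l)$), $\vec\iota$ denoting words of $\iota$'s, generated by the rules: (Refl) $P\xrightarrow[\vec\iota]{\vec\iota}P$; ($\iota$L) from $P\xrightarrow[\vec\iota]{\vec\iota}R$ and $R\xrightarrow[\vec b]{\vec a}Q$ infer $P\xrightarrow[\vec b]{\vec a}Q$; ($\iota$R) from $P\xrightarrow[\vec b]{\vec a}R$ and $R\xrightarrow[\vec\iota]{\vec\iota}Q$ infer $P\xrightarrow[\vec b]{\vec a}Q$; (Cut) from $P\xrightarrow[\vec c]{\vec a}Q$, $R\xrightarrow[\vec b]{\vec c}S$ infer $P\mathrel{;}R\xrightarrow[\vec b]{\vec a}Q\mathrel{;}S$; (Ten) from $P\xrightarrow[\vec b]{\vec a}Q$, $R\xrightarrow[\vec d]{\vec c}S$ infer $P\otimes R\xrightarrow[\vec b\vec d]{\vec a\vec c}Q\otimes S$; (Pref) for every map $\sigma:bd\to L$, $\frac{u}{v}.P\xrightarrow[v|_\sigma]{u|_\sigma}P|_\sigma$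 where $u|_\sigma$ replaces each $\lambda x$ by $\sigma(x)$ and $P|_\sigma$ substitutes $\sigma(x)$ for $x$; (Rec) from $P[\mu Y.P/Y]\xrightarrow[\vec b]{\vec a}Q$ infer $\mu Y.P\xrightarrow[\vec b]{\vec a}Q$; ($+\iota$) from $P\xrightarrow[\vec\iota]{\vec\iota}Q$, $R\xrightarrow[\vec\iota]{\vec\iota}S$ infer $P+R\xrightarrow[\vec\iota]{\vec\iota}Q+S$; ($+$L) from $P\xrightarrow[\vec b]{\vec a}Q$ with $\vec a\vec b$ not consisting only of $\iota$'s infer $P+R\xrightarrow[\vec b]{\vec a}Q$, and symmetrically ($+$R). Bisimilarity: for closed terms $P,Q$ of the same sort, $P\sim Q$ iff there is a relation $S$ on terms containing $(P,Q)$ such that whenever $(P',Q')\in S$ and $P'\xrightarrow[\vec b]{\vec a}P''$ there is $Q''$ with $Q'\xrightarrow[\vec b]{\vec a}Q''$ and $(P'',Q'')\in S$, and symmetrically with the roles of the two sides exchanged. *)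

From Stdlib Require Import List Arith Bool.
Import ListNotations.
Set Implicit Arguments.

Section Wire.

(* The set of signals Sigma; the label set L = Sigma + {iota} is [option Sig],
   with [None] playing the role of iota ("no signal"). *)
Variable Sig : Type.
Definition L := option Sig.

(* Atoms of prefix strings: signal variable x, binder \lambda x, iota, constant sigma. *)
Inductive atom : Type :=
| AVar  : nat -> atom
| ABind : nat -> atom
| AIota : atom
| AConst : Sig -> atom.

Inductive term : Type :=
| TVar  : nat -> term
| Seq   : term -> term -> term
| Ten   : term -> term -> term
| Pref  : list atom -> list atom -> term -> term
| Plus  : term -> term -> term
| Mu    : nat -> nat * nat -> term -> term.

Fixpoint bd (w : list atom) : list nat :=
  match w with
  | [] => []
  | ABind x :: w' => x :: bd w'
  | _ :: w' => bd w'
  end.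

Fixpoint fr (w : list atom) : list nat :=
  match w with
  | [] => []
  | AVar x :: w' => x :: fr w'
  | _ :: w' => fr w'
  end.

Definition memb (x : nat) (s : list nat) : bool := existsb (Nat.eqb x) s.

Fixpoint lookup (Y : nat) (pe : list (nat * (nat * nat))) : option (nat * nat) :=
  match pe with
  | [] => None
  | (Z, t) :: pe' => if Nat.eqb Y Z then Some t else lookup Y pe'
  end.

(* Sorting judgement: [sorted pe D P k l] means P : (k,l) in the context made of
   the sorted process variables [pe] and the signal variables [D]. *)
Inductive sorted : list (nat * (nat * nat)) -> list nat -> term -> nat -> nat -> Prop :=
| s_var pe D Y k l :
    lookup Y pe = Some (k, l) -> sorted pe D (TVar Y) k l
| s_seq pe D P R k n l :
    sorted pe D P k n -> sorted pe D R n l -> sorted pe D (Seq P R) k l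
| s_ten pe D P Q k l m n :
    sorted pe D P k l -> sorted pe D Q m n -> sorted pe D (Ten P Q) (k + m) (l + n)
| s_mu pe D Y t P k l :
    sorted ((Y, t) :: pe) D P k l -> sorted pe D (Mu Y t P) k l
| s_pref pe D u v P :
    (forall x, In x (fr (u ++ v)) -> ~ In x (bd (u ++ v))) ->
    (forall x, In x (fr (u ++ v)) -> In x D) ->
    sorted pe (D ++ bd (u ++ v)) P (length u) (length v) ->
    sorted pe D (Pref u v P) (length u) (length v)
| s_plus pe D P Q k l :
    sorted pe D P k l -> sorted pe D Q k l -> sorted pe D (Plus P Q) k l.

Definition closed_sort (P : term) (k l : nat) : Prop := sorted [] [] P k l.

Definition atom_of_L (a : L) : atom :=
  match a with None => AIota | Some c => AConst c end.

Definition asubst (f : nat -> option L) (a : atom) : atom :=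
  match a with
  | AVar x => match f x with Some c => atom_of_L c | None => a end
  | _ => a
  end.

Fixpoint ssubst (f : nat -> option L) (P : term) : term :=
  match P with
  | TVar Y => TVar Y
  | Seq P1 P2 => Seq (ssubst f P1) (ssubst f P2)
  | Ten P1 P2 => Ten (ssubst f P1) (ssubst f P2)
  | Plus P1 P2 => Plus (ssubst f P1) (ssubst f P2)
  | Mu Y t P1 => Mu Y t (ssubst f P1)
  | Pref u v P1 =>
      let f' := fun x => if memb x (bd (u ++ v)) then None else f x in
      Pref (map (asubst f') u) (map (asubst f') v) (ssubst f' P1)
  end.

Fixpoint psubst (Y : nat) (R : term) (P : term) : term :=
  match P with
  | TVar Z => if Nat.eqb Z Y then R else TVar Z
  | Seq P1 P2 => Seq (psubst Y R P1) (psubst Y R P2)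
  | Ten P1 P2 => Ten (psubst Y R P1) (psubst Y R P2)
  | Plus P1 P2 => Plus (psubst Y R P1) (psubst Y R P2)
  | Mu Z t P1 => if Nat.eqb Z Y then Mu Z t P1 else Mu Z t (psubst Y R P1)
  | Pref u v P1 => Pref u v (psubst Y R P1)
  end.

(* The map sigma : bd -> L, given as a total function sigma restricted to bd. *)
Definition restr (B : list nat) (sigma : nat -> L) : nat -> option L :=
  fun x => if memb x B then Some (sigma x) else None.

Definition inst_atom (B : list nat) (sigma : nat -> L) (a : atom) : option L :=
  match a with
  | AVar x => restr B sigma x
  | ABind x => Some (sigma x)
  | AIota => Some None
  | AConst c => Some (Some c)
  end.

Fixpoint inst (B : list nat) (sigma : nat -> L) (w : list atom) : option (list L) :=
  match w with
  | [] => Some []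
  | a :: w' =>
      match inst_atom B sigma a, inst B sigma w' with
      | Some c, Some cs => Some (c :: cs)
      | _, _ => None
      end
  end.

Definition iotas (w : list L) : Prop := Forall (fun c => c = None) w.

Inductive trans : term -> list L -> list L -> term -> Prop :=
| t_refl P k l :
    closed_sort P k l -> trans P (repeat None k) (repeat None l) P
| t_iotaL P a0 b0 R a b Q :
    iotas a0 -> iotas b0 -> trans P a0 b0 R -> trans R a b Q -> trans P a b Q
| t_iotaR P a b R a0 b0 Q :
    iotas a0 -> iotas b0 -> trans P a b R -> trans R a0 b0 Q -> trans P a b Q
| t_cut P a c Q R b S :
    trans P a c Q -> trans R c b S -> trans (Seq P R) a b (Seq Q S)
| t_ten P a b Q R c d S :
    trans P a b Q -> trans R c d S -> trans (Ten P R) (a ++ c) (b ++ d) (Ten Q S)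
| t_pref u v P (sigma : nat -> L) a b :
    inst (bd (u ++ v)) sigma u = Some a ->
    inst (bd (u ++ v)) sigma v = Some b ->
    trans (Pref u v P) a b (ssubst (restr (bd (u ++ v)) sigma) P)
| t_rec Y t P a b Q :
    trans (psubst Y (Mu Y t P) P) a b Q -> trans (Mu Y t P) a b Q
| t_plus_iota P a b Q R S :
    iotas a -> iotas b -> trans P a b Q -> trans R a b S ->
    trans (Plus P R) a b (Plus Q S)
| t_plusL P a b Q R :
    ~ iotas (a ++ b) -> trans P a b Q -> trans (Plus P R) a b Q
| t_plusR R a b S P :
    ~ iotas (a ++ b) -> trans R a b S -> trans (Plus P R) a b S.

Definition is_bisimulation (Rel : term -> term -> Prop) : Prop :=
  forall P Q, Rel P Q ->
    (forall a b P', trans P a b P' -> exists Q', trans Q a b Q' /\ Rel P' Q') /\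
    (forall a b Q', trans Q a b Q' -> exists P', trans P a b P' /\ Rel P' Q').

Definition bisimilar (P Q : term) : Prop :=
  (exists k l, closed_sort P k l /\ closed_sort Q k l) /\
  exists Rel, Rel P Q /\ is_bisimulation Rel.

End Wire.

(** The relation pairing C[P] with C[Q], for a one-hole context C and
    bisimilar P, Q, is a bisimulation up to bisimilarity: every step of C[P]
    is matched by a step of C[Q] whose targets are again related or are
    bisimilar.  A step of C[P] either comes from the rule of the head
    constructor of C, and is then matched using the bisimulation between P
    and Q, or it is a composite with idle (iota) steps, in which case the two
    halves are matched separately; this is why the intermediate states need
    only be related up to bisimilarity.  For a prefix the argument is even
    simpler: since P and Q are closed, instantiating the bound signal
    variables leaves them unchanged, so the prefix steps of u/v.P and u/v.Q
    lead to P and Q themselves. *)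

From Stdlib Require Import List Arith.
Set Implicit Arguments.

Section Congruence.

Variable Sig : Type.
Notation term := (term Sig).

Definition bisim (P Q : term) : Prop :=
  exists Rel, Rel P Q /\ is_bisimulation Rel.

Lemma bisim_sim P Q a b P' :
  bisim P Q -> trans P a b P' -> exists Q', trans Q a b Q' /\ bisim P' Q'.
Proof.
  intros [Rel [HPQ Hbis]] HP.
  destruct (proj1 (Hbis _ _ HPQ) _ _ _ HP) as [Q' [HQ HPQ']].
  exists Q'; split; [exact HQ | exists Rel; auto].
Qed.

Lemma bisim_sym P Q : bisim P Q -> bisim Q P.
Proof.
  intros [Rel [HPQ Hbis]]. exists (fun X Y => Rel Y X). split; [exact HPQ |].
  intros X Y HYX. destruct (Hbis _ _ HYX) as [Hfwd Hbwd]. split.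
  - intros a b X' HX. destruct (Hbwd _ _ _ HX) as [Y' [? ?]]; eauto.
  - intros a b Y' HY. destruct (Hfwd _ _ _ HY) as [X' [? ?]]; eauto.
Qed.

Lemma bisim_refl P : bisim P P.
Proof. exists eq. split; [reflexivity |]. intros X Y <-. split; eauto. Qed.

Section UpToBisimilarity.

Variable C : term -> term -> Prop.

Definition up_to_bisim (X Y : term) : Prop := bisim X Y \/ C X Y.

Definition matched (X : term) (a b : list (L Sig)) (X' : term) : Prop :=
  forall Y, C X Y -> exists Y', trans Y a b Y' /\ up_to_bisim X' Y'.

Definition progresses : Prop :=
  forall X a b X', trans X a b X' -> matched X a b X'.

Lemma up_to_bisim_matched X a b X' :
  trans X a b X' -> matched X a b X' ->
  forall Y, up_to_bisim X Y -> exists Y', trans Y a b Y' /\ up_to_bisim X' Y'.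
Proof.
  intros HX HmX Y [HXY | HXY]; [| exact (HmX Y HXY)].
  destruct (bisim_sim HXY HX) as [Y' [HY HXY']].
  exists Y'; split; [exact HY | left; exact HXY'].
Qed.

Lemma matched_compose P a1 b1 R a2 b2 Q a b :
  (forall Y Z W, trans Y a1 b1 Z -> trans Z a2 b2 W -> trans Y a b W) ->
  trans R a2 b2 Q -> matched P a1 b1 R -> matched R a2 b2 Q -> matched P a b Q.
Proof.
  intros Hcomp HR HmP HmR Y HPY.
  destruct (HmP Y HPY) as [Z [HYZ HRZ]].
  destruct (up_to_bisim_matched HR HmR HRZ) as [W [HZW HQW]].
  exists W; split; [exact (Hcomp _ _ _ HYZ HZW) | exact HQW].
Qed.

Lemma matched_iotaL P a0 b0 R a b Q :
  matched P a0 b0 R -> matched R a b Q -> trans R a b Q ->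
  iotas a0 -> iotas b0 -> matched P a b Q.
Proof.
  intros HmP HmR HR Ha0 Hb0.
  exact (matched_compose (fun _ _ _ => t_iotaL Ha0 Hb0) HR HmP HmR).
Qed.

Lemma matched_iotaR P a b R a0 b0 Q :
  matched P a b R -> matched R a0 b0 Q -> trans R a0 b0 Q ->
  iotas a0 -> iotas b0 -> matched P a b Q.
Proof.
  intros HmP HmR HR Ha0 Hb0.
  exact (matched_compose (fun _ _ _ => t_iotaR Ha0 Hb0) HR HmP HmR).
Qed.

Hypothesis C_sym : forall X Y, C X Y -> C Y X.

Lemma up_to_bisim_sym X Y : up_to_bisim X Y -> up_to_bisim Y X.
Proof. intros [HXY | HXY]; [left; apply bisim_sym | right; apply C_sym]; exact HXY. Qed.

Lemma up_to_bisim_is_bisimulation : progresses -> is_bisimulation up_to_bisim.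
Proof.
  intros Hprog X Y HXY. split.
  - intros a b X' HX. exact (up_to_bisim_matched HX (Hprog _ _ _ _ HX) HXY).
  - intros a b Y' HY.
    destruct (up_to_bisim_matched HY (Hprog _ _ _ _ HY) (up_to_bisim_sym HXY))
      as [X' [HX HYX']].
    exists X'; split; [exact HX | exact (up_to_bisim_sym HYX')].
Qed.

Lemma bisim_up_to X Y : progresses -> C X Y -> bisim X Y.
Proof.
  intros Hprog HXY. exists up_to_bisim.
  split; [right; exact HXY | exact (up_to_bisim_is_bisimulation Hprog)].
Qed.

End UpToBisimilarity.

Ltac iota_composition :=
  first [ eapply matched_iotaL; eassumption | eapply matched_iotaR; eassumption ].

Lemma iotas_repeat k : iotas (repeat (@None Sig) k).
Proof. induction k; constructor; auto. Qed.

Lemma closed_seq_inv (P R : term) k l :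
  closed_sort (Seq P R) k l -> exists n, closed_sort P k n /\ closed_sort R n l.
Proof. intros H; inversion H; eauto. Qed.

Lemma closed_ten_inv (P R : term) k l :
  closed_sort (Ten P R) k l ->
  exists k1 l1 k2 l2,
    k = k1 + k2 /\ l = l1 + l2 /\ closed_sort P k1 l1 /\ closed_sort R k2 l2.
Proof. intros H; inversion H; subst; eauto 10. Qed.

Lemma closed_plus_inv (P R : term) k l :
  closed_sort (Plus P R) k l -> closed_sort P k l /\ closed_sort R k l.
Proof. intros H; inversion H; auto. Qed.

Lemma closed_pref_sort u v (P : term) k l :
  closed_sort (Pref u v P) k l -> k = length u /\ l = length v.
Proof. intros H; inversion H; auto. Qed.

(* [E P S] fills the context [E _ S] with [P]; [S] is quantified because the
   rest of the context evolves along with the hole. *)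
Definition ctx_rel (E : term -> term -> term) (X Y : term) : Prop :=
  exists P Q S, bisim P Q /\ X = E P S /\ Y = E Q S.

Lemma ctx_rel_sym E X Y : ctx_rel E X Y -> ctx_rel E Y X.
Proof.
  intros (P & Q & S & HPQ & -> & ->).
  exists Q, P, S; split; [apply bisim_sym; exact HPQ | split; reflexivity].
Qed.

Lemma ctx_related E P Q S :
  bisim P Q -> up_to_bisim (ctx_rel E) (E P S) (E Q S).
Proof. intros HPQ; right; exists P, Q, S; auto. Qed.

Lemma bisim_ctx E S P Q :
  progresses (ctx_rel E) -> bisim P Q -> bisim (E P S) (E Q S).
Proof.
  intros Hprog HPQ. apply (bisim_up_to (@ctx_rel_sym E) _ _ Hprog).
  exists P, Q, S; auto.
Qed.

Lemma progresses_seq_left : progresses (ctx_rel (@Seq Sig)).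
Proof.
  intros X a b X' HX; induction HX; try iota_composition;
    intros V (P0 & Q0 & S0 & HPQ & EX & ->); try discriminate.
  - subst. destruct (closed_seq_inv H) as [n [HP0 HS0]].
    destruct (bisim_sim HPQ (t_refl HP0)) as [Q' [HQ HPQ']].
    exists (Seq Q' S0).
    split; [exact (t_cut HQ (t_refl HS0)) | apply (ctx_related (@Seq Sig)); exact HPQ'].
  - injection EX as <- <-. destruct (bisim_sim HPQ HX1) as [Q' [HQ HPQ']].
    exists (Seq Q' S).
    split; [exact (t_cut HQ HX2) | apply (ctx_related (@Seq Sig)); exact HPQ'].
Qed.

Lemma progresses_seq_right : progresses (ctx_rel (fun P T => Seq T P)).
Proof.
  intros X a b X' HX; induction HX; try iota_composition;
    intros V (P0 & Q0 & T0 & HPQ & EX & ->); try discriminate.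
  - subst. destruct (closed_seq_inv H) as [n [HT0 HP0]].
    destruct (bisim_sim HPQ (t_refl HP0)) as [Q' [HQ HPQ']].
    exists (Seq T0 Q').
    split; [exact (t_cut (t_refl HT0) HQ) | apply (ctx_related (fun P T => Seq T P)); exact HPQ'].
  - injection EX as <- <-. destruct (bisim_sim HPQ HX2) as [Q' [HQ HPQ']].
    exists (Seq Q Q').
    split; [exact (t_cut HX1 HQ) | apply (ctx_related (fun P T => Seq T P)); exact HPQ'].
Qed.

Lemma progresses_ten_left : progresses (ctx_rel (@Ten Sig)).
Proof.
  intros X a b X' HX; induction HX; try iota_composition;
    intros V (P0 & Q0 & S0 & HPQ & EX & ->); try discriminate.
  - subst. destruct (closed_ten_inv H) as (k1 & l1 & k2 & l2 & -> & -> & HP0 & HS0).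
    destruct (bisim_sim HPQ (t_refl HP0)) as [Q' [HQ HPQ']].
    exists (Ten Q' S0). rewrite !repeat_app.
    split; [exact (t_ten HQ (t_refl HS0)) | apply (ctx_related (@Ten Sig)); exact HPQ'].
  - injection EX as <- <-. destruct (bisim_sim HPQ HX1) as [Q' [HQ HPQ']].
    exists (Ten Q' S).
    split; [exact (t_ten HQ HX2) | apply (ctx_related (@Ten Sig)); exact HPQ'].
Qed.

Lemma progresses_ten_right : progresses (ctx_rel (fun P T => Ten T P)).
Proof.
  intros X a b X' HX; induction HX; try iota_composition;
    intros V (P0 & Q0 & T0 & HPQ & EX & ->); try discriminate.
  - subst. destruct (closed_ten_inv H) as (k1 & l1 & k2 & l2 & -> & -> & HT0 & HP0).
    destruct (bisim_sim HPQ (t_refl HP0)) as [Q' [HQ HPQ']].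
    exists (Ten T0 Q'). rewrite !repeat_app.
    split; [exact (t_ten (t_refl HT0) HQ) | apply (ctx_related (fun P T => Ten T P)); exact HPQ'].
  - injection EX as <- <-. destruct (bisim_sim HPQ HX2) as [Q' [HQ HPQ']].
    exists (Ten Q Q').
    split; [exact (t_ten HX1 HQ) | apply (ctx_related (fun P T => Ten T P)); exact HPQ'].
Qed.

Lemma progresses_plus_left : progresses (ctx_rel (@Plus Sig)).
Proof.
  intros X a b X' HX; induction HX; try iota_composition;
    intros V (P0 & Q0 & S0 & HPQ & EX & ->); try discriminate.
  - subst. destruct (closed_plus_inv H) as [HP0 HS0].
    destruct (bisim_sim HPQ (t_refl HP0)) as [Q' [HQ HPQ']].
    exists (Plus Q' S0). split.
    + exact (t_plus_iota (iotas_repeat _) (iotas_repeat _) HQ (t_refl HS0)).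
    + apply (ctx_related (@Plus Sig)); exact HPQ'.
  - injection EX as <- <-. destruct (bisim_sim HPQ HX1) as [Q' [HQ HPQ']].
    exists (Plus Q' S). split.
    + apply t_plus_iota; assumption.
    + apply (ctx_related (@Plus Sig)); exact HPQ'.
  - injection EX as <- <-. destruct (bisim_sim HPQ HX) as [Q' [HQ HPQ']].
    exists Q'; split; [apply t_plusL; assumption | left; exact HPQ'].
  - injection EX as <- <-.
    exists S; split; [apply t_plusR; assumption | left; apply bisim_refl].
Qed.

Lemma progresses_plus_right : progresses (ctx_rel (fun P T => Plus T P)).
Proof.
  intros X a b X' HX; induction HX; try iota_composition;
    intros V (P0 & Q0 & T0 & HPQ & EX & ->); try discriminate.
  - subst. destruct (closed_plus_inv H) as [HT0 HP0].
    destruct (bisim_sim HPQ (t_refl HP0)) as [Q' [HQ HPQ']].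
    exists (Plus T0 Q'). split.
    + exact (t_plus_iota (iotas_repeat _) (iotas_repeat _) (t_refl HT0) HQ).
    + apply (ctx_related (fun P T => Plus T P)); exact HPQ'.
  - injection EX as <- <-. destruct (bisim_sim HPQ HX2) as [Q' [HQ HPQ']].
    exists (Plus Q Q'). split.
    + apply t_plus_iota; assumption.
    + apply (ctx_related (fun P T => Plus T P)); exact HPQ'.
  - injection EX as <- <-.
    exists Q; split; [apply t_plusL; assumption | left; apply bisim_refl].
  - injection EX as <- <-. destruct (bisim_sim HPQ HX) as [Q' [HQ HPQ']].
    exists Q'; split; [apply t_plusR; assumption | left; exact HPQ'].
Qed.

Lemma fr_app (u v : list (atom Sig)) : fr (u ++ v) = fr u ++ fr v.
Proof. induction u as [| [] u IH]; simpl; rewrite ?IH; reflexivity. Qed.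

Lemma memb_In x s : In x s -> memb x s = true.
Proof. intros Hx. apply existsb_exists. exists x; split; [exact Hx | apply Nat.eqb_refl]. Qed.

Lemma map_asubst_fresh f (w : list (atom Sig)) :
  (forall x, In x (fr w) -> f x = None) -> map (asubst f) w = w.
Proof.
  induction w as [| [x | | |] w IH]; simpl; intros Hf; rewrite ?IH; auto.
  rewrite Hf by auto. reflexivity.
Qed.

Lemma ssubst_sorted_fresh pe D (P : term) k l :
  sorted pe D P k l -> forall f, (forall x, In x D -> f x = None) -> ssubst f P = P.
Proof.
  induction 1; intros f Hf; simpl; try (rewrite IHsorted1, IHsorted2 by exact Hf);
    try (rewrite IHsorted by exact Hf); try reflexivity.
  set (g := fun x => if memb x (bd (u ++ v)) then None else f x).
  assert (Hg_fr : forall x, In x (fr u ++ fr v) -> g x = None).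
  { intros x Hx. unfold g. destruct (memb x (bd (u ++ v))); auto.
    apply Hf, H0. rewrite fr_app. exact Hx. }
  assert (Hg_D : forall x, In x (D ++ bd (u ++ v)) -> g x = None).
  { intros x Hx. unfold g. destruct (in_app_or _ _ _ Hx) as [HD | Hbd].
    - destruct (memb x (bd (u ++ v))); auto.
    - rewrite memb_In by exact Hbd. reflexivity. }
  rewrite !map_asubst_fresh, (IHsorted g Hg_D); auto using in_or_app.
Qed.

Definition closed (P : term) : Prop := exists k l, closed_sort P k l.

Lemma ssubst_closed f (P : term) : closed P -> ssubst f P = P.
Proof. intros (k & l & HP). apply (ssubst_sorted_fresh HP). contradiction. Qed.

Definition pref_rel (u v : list (atom Sig)) (X Y : term) : Prop :=
  exists P Q, bisim P Q /\ closed P /\ closed Q /\ closed X /\ closed Y /\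
    X = Pref u v P /\ Y = Pref u v Q.

Lemma pref_rel_sym u v X Y : pref_rel u v X Y -> pref_rel u v Y X.
Proof.
  intros (P & Q & HPQ & HP & HQ & HX & HY & -> & ->).
  exists Q, P; repeat split; auto using bisim_sym.
Qed.

Lemma progresses_pref u v : progresses (pref_rel u v).
Proof.
  intros X a b X' HX; induction HX; try iota_composition;
    intros V (P0 & Q0 & HPQ & HP0 & HQ0 & _ & (k2 & l2 & HY) & EX & ->);
    try discriminate.
  - subst. destruct (closed_pref_sort H) as [-> ->].
    destruct (closed_pref_sort HY) as [-> ->].
    exists (Pref u v Q0); split; [exact (t_refl HY) |].
    right; exists P0, Q0; repeat split; try assumption; exists (length u), (length v); assumption.
  - injection EX as -> -> ->.
    exists Q0; split.
    + rewrite <- (ssubst_closed (restr (bd (u ++ v)) sigma) HQ0) at 2.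
      apply t_pref; assumption.
    + left; rewrite (ssubst_closed _ HP0); exact HPQ.
Qed.

Lemma bisim_pref u v P Q :
  bisim P Q -> closed P -> closed Q -> closed (Pref u v P) -> closed (Pref u v Q) ->
  bisim (Pref u v P) (Pref u v Q).
Proof.
  intros HPQ HP HQ HuP HuQ.
  apply (bisim_up_to (@pref_rel_sym u v) _ _ (@progresses_pref u v)).
  exists P, Q; auto 10.
Qed.

End Congruence.

Theorem mainTheorem1 (Sig : Type) (P Q R S T : term Sig) (k l m n l' k' : nat) :
  closed_sort P k l -> closed_sort Q k l -> closed_sort R m n ->
  closed_sort S l l' -> closed_sort T k' k ->
  bisimilar P Q ->
  (* (i) *)
  (bisimilar (Seq P S) (Seq Q S) /\ bisimilar (Seq T P) (Seq T Q)) /\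
  (* (ii) *)
  (bisimilar (Ten P R) (Ten Q R) /\ bisimilar (Ten R P) (Ten R Q)) /\
  (* (iii) *)
  (forall u v : list (atom Sig),
     (exists k0 l0, closed_sort (Pref u v P) k0 l0) ->
     (exists k0 l0, closed_sort (Pref u v Q) k0 l0) ->
     bisimilar (Pref u v P) (Pref u v Q)) /\
  (* (iv) *)
  (m = k -> n = l ->
     bisimilar (Plus P R) (Plus Q R) /\ bisimilar (Plus R P) (Plus R Q)).
Proof.
  intros HP HQ HR HS HT [_ HPQ].
  split; [split | split; [split | split]].
  - split; [exists k, l'; split; econstructor; eassumption |].
    exact (bisim_ctx S (@progresses_seq_left Sig) HPQ).
  - split; [exists k', l; split; econstructor; eassumption |].
    exact (bisim_ctx T (@progresses_seq_right Sig) HPQ).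
  - split; [exists (k + m), (l + n); split; econstructor; eassumption |].
    exact (bisim_ctx R (@progresses_ten_left Sig) HPQ).
  - split; [exists (m + k), (n + l); split; econstructor; eassumption |].
    exact (bisim_ctx R (@progresses_ten_right Sig) HPQ).
  - intros u v [k1 [l1 HuP]] [k2 [l2 HuQ]].
    destruct (closed_pref_sort HuP) as [-> ->], (closed_pref_sort HuQ) as [-> ->].
    split; [exists (length u), (length v); split; assumption |].
    apply bisim_pref; [exact HPQ | exists k, l; exact HP | exists k, l; exact HQ
                      | exists (length u), (length v); exact HuP
                      | exists (length u), (length v); exact HuQ].
  - intros -> ->. split; (split; [exists k, l; split; econstructor; eassumption |]).
    + exact (bisim_ctx R (@progresses_plus_left Sig) HPQ).
    + exact (bisim_ctx R (@progresses_plus_right Sig) HPQ).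
Qed.
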